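(* Let $h$ be an isometry of the Urysohn metric space $\mathbb U$ and let $\delta>0$. Then for every finite $\mathbf A\subseteq\mathbb U$ there is an isometry $f$ of $\mathbb U$ such that $d(f(a),h(a))\leq\delta$ for all $a\in\mathbf A$, while $d(a,f(b))\geq\delta$ for all $a,b\in\mathbf A$.
   Context: The Urysohn metric space $\mathbb U$ is, up to isometry, the unique complete separable metric space such that every isometric embedding of a finite metric space $\mathbf A$ into $\mathbb U$ extends to any one-point metric extension $\mathbf A\cup\{y\}$ of $\mathbf A$. *)

From Stdlib Require Export Reals List.
Open Scope R_scope.
Set Implicit Arguments.
Unset Strict Implicit.

Definition is_metric (T : Type) (d : T -> T -> R) : Prop :=
  (forall x y, 0 <= d x y) /\
  (forall x y, d x y = 0 <-> x = y) /\
  (forall x y, d x y = d y x) /\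
  (forall x y z, d x z <= d x y + d y z).

Definition cauchy_seq (T : Type) (d : T -> T -> R) (u : nat -> T) : Prop :=
  forall eps, 0 < eps -> exists N, forall m n, (N <= m)%nat -> (N <= n)%nat ->
    d (u m) (u n) < eps.

Definition converges_to (T : Type) (d : T -> T -> R) (u : nat -> T) (l : T) : Prop :=
  forall eps, 0 < eps -> exists N, forall n, (N <= n)%nat -> d (u n) l < eps.

Definition complete_metric (T : Type) (d : T -> T -> R) : Prop :=
  forall u : nat -> T, cauchy_seq d u -> exists l, converges_to d u l.

Definition separable_metric (T : Type) (d : T -> T -> R) : Prop :=
  exists s : nat -> T, forall x eps, 0 < eps -> exists n, d (s n) x < eps.

(* One-point extension property: a one-point metric extension A ∪ {y} of a
   finite subset A (listed by the list A) is determined by the distances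
   r a = d(a,y) (a in A), which must be positive (y is a new point) and make
   A ∪ {y} a metric space (triangle inequalities). *)
Definition one_point_extension_property (T : Type) (d : T -> T -> R) : Prop :=
  forall (A : list T) (r : T -> R),
    (forall a, In a A -> 0 < r a) ->
    (forall a b, In a A -> In b A ->
        d a b <= r a + r b /\ r a <= d a b + r b) ->
    exists z : T, forall a, In a A -> d a z = r a.

Definition is_urysohn (T : Type) (d : T -> T -> R) : Prop :=
  is_metric d /\ complete_metric d /\ separable_metric d /\
  one_point_extension_property d.

Definition isometry (T : Type) (d : T -> T -> R) (f : T -> T) : Prop :=
  (forall y, exists x, f x = y) /\ (forall x y, d (f x) (f y) = d x y).

From Stdlib Require Import Reals List Lra Lia Classical ClassicalEpsilon.
Open Scope R_scope.

(* Let C = A ++ h(A). In T * R with the l1 metric, the points (h a, delta), a in A,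
   sit at height delta above the copy C * {0} of C. The one-point extension property
   realizes this finite configuration in T, giving points b_a with d(b_a, b_a') = d(a, a')
   and d(b_a, y) = d(h a, y) + delta for y in C. By back and forth along a dense sequence,
   completed using completeness, T is ultrahomogeneous, so a |-> b_a extends to an
   isometry f; then d(f a, h a) = delta and d(a, f b) = d(h b, a) + delta >= delta. *)

Section MetricFacts.
Context {X : Type} {d : X -> X -> R} (Hd : is_metric d).

Lemma dist_ge0 x y : 0 <= d x y. Proof. exact (proj1 Hd x y). Qed.
Lemma dist_eq0 x y : d x y = 0 -> x = y. Proof. exact (proj1 (proj1 (proj2 Hd) x y)). Qed.
Lemma dist_xx x : d x x = 0. Proof. exact (proj2 (proj1 (proj2 Hd) x x) eq_refl). Qed.
Lemma dist_sym x y : d x y = d y x. Proof. exact (proj1 (proj2 (proj2 Hd)) x y). Qed.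
Lemma dist_tri x y z : d x z <= d x y + d y z. Proof. exact (proj2 (proj2 (proj2 Hd)) x y z). Qed.

Lemma dist_tri4 x a b y : d x y <= d x a + d a b + d b y.
Proof. pose proof (dist_tri x a y); pose proof (dist_tri a b y); lra. Qed.

End MetricFacts.

Lemma inv_succ_small (eps : R) :
  0 < eps -> exists N, forall n, (N <= n)%nat -> / INR (S n) < eps.
Proof.
  intros He; destruct (archimed_cor1 eps He) as [N [HN HN0]]; exists N; intros n Hn.
  apply Rle_lt_trans with (/ INR N); [|exact HN].
  apply Rinv_le_contravar; [apply lt_0_INR; exact HN0 | apply le_INR; lia].
Qed.

Lemma eq_of_forall_close (u v : R) :
  (forall eps, 0 < eps -> u <= v + eps /\ v <= u + eps) -> u = v.
Proof.
  intros H; apply Rle_antisym; apply Rle_plus_epsilon; intros eps He; apply H, He.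
Qed.

Definition l1_dist {X : Type} (d : X -> X -> R) (p q : X * R) : R :=
  d (fst p) (fst q) + Rabs (snd p - snd q).

Lemma l1_dist_metric {X : Type} {d : X -> X -> R} : is_metric d -> is_metric (l1_dist d).
Proof.
  intros Hd; unfold l1_dist; split; [|split; [|split]].
  - intros p q; pose proof (dist_ge0 Hd (fst p) (fst q)).
    pose proof (Rabs_pos (snd p - snd q)); lra.
  - intros [x s] [y t]; simpl; split.
    + intros H0; pose proof (dist_ge0 Hd x y); pose proof (Rabs_pos (s - t)).
      assert (Hxy : d x y = 0) by lra.
      assert (Hst : Rabs (s - t) = 0) by lra.
      apply (dist_eq0 Hd) in Hxy; subst y.
      destruct (Req_dec s t) as [->|Hne]; [reflexivity|].
      pose proof (Rabs_pos_lt (s - t) (fun E => Hne (Rminus_diag_uniq _ _ E))); lra.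
    + intros [= -> ->]; rewrite (dist_xx Hd), Rminus_diag, Rabs_R0; ring.
  - intros p q; rewrite (dist_sym Hd), Rabs_minus_sym; reflexivity.
  - intros p q r; pose proof (dist_tri Hd (fst p) (fst q) (fst r)).
    pose proof (Rabs_triang (snd p - snd q) (snd q - snd r)).
    replace (snd p - snd r) with (snd p - snd q + (snd q - snd r)) by ring; lra.
Qed.

(* [W] is read as the graph of a finite partial map [fst p |-> snd p]. *)
Definition dist_preserving {X Y : Type} (dX : X -> X -> R) (dY : Y -> Y -> R)
  (W : list (X * Y)) : Prop :=
  forall p q, In p W -> In q W -> dX (fst p) (fst q) = dY (snd p) (snd q).

Section DistPreserving.
Context {X Y : Type} {dX : X -> X -> R} {dY : Y -> Y -> R} (HX : is_metric dX) (HY : is_metric dY).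

Lemma dist_preserving_functional {W x y y'} :
  dist_preserving dX dY W -> In (x, y) W -> In (x, y') W -> y = y'.
Proof.
  intros HW Hy Hy'; apply (dist_eq0 HY).
  pose proof (HW _ _ Hy Hy') as E; simpl in E.
  rewrite <- E; apply (dist_xx HX).
Qed.

Lemma dist_preserving_cons {W x y} :
  dist_preserving dX dY W -> (forall p, In p W -> dX x (fst p) = dY y (snd p)) ->
  dist_preserving dX dY ((x, y) :: W).
Proof.
  intros HW Hxy p q [<-|Hp] [<-|Hq]; simpl.
  - rewrite (dist_xx HX), (dist_xx HY); reflexivity.
  - exact (Hxy q Hq).
  - rewrite (dist_sym HX), (dist_sym HY); exact (Hxy p Hp).
  - exact (HW p q Hp Hq).
Qed.

End DistPreserving.

Lemma dist_preserving_swap {X Y : Type} {dX : X -> X -> R} {dY : Y -> Y -> R} {W : list (X * Y)} :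
  dist_preserving dX dY W -> dist_preserving dY dX (map (fun p => (snd p, fst p)) W).
Proof.
  intros HW p q Hp Hq.
  apply in_map_iff in Hp as [p' [<- Hp]]; apply in_map_iff in Hq as [q' [<- Hq]].
  symmetry; exact (HW p' q' Hp Hq).
Qed.

Section Urysohn.
Context {T : Type} {d : T -> T -> R} (HU : is_urysohn d).
Let Hd : is_metric d := proj1 HU.

(* The one-point extension property, for a finite copy [W] in [T] of points of an
   arbitrary metric space [U]; if [u] is already copied, its copy is reused. *)
Lemma realize_point {U : Type} {e : U -> U -> R} (He : is_metric e) {W : list (T * U)} (u : U) :
  dist_preserving d e W -> exists z, forall p, In p W -> d z (fst p) = e u (snd p).
Proof.
  intros HW.
  destruct (classic (exists p, In p W /\ e u (snd p) = 0)) as [[p0 [Hp0 Hu]]|Hpos].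
  { apply (dist_eq0 He) in Hu; subst u.
    exists (fst p0); intros p Hp; exact (HW p0 p Hp0 Hp). }
  pose (rep w := epsilon (inhabits u) (fun v => In (w, v) W)).
  assert (Hrep : forall p, In p W -> rep (fst p) = snd p).
  { intros [w v] Hp; simpl.
    eapply (dist_preserving_functional Hd He); [exact HW | | exact Hp].
    apply (epsilon_spec _ (fun v => In (w, v) W)); eauto. }
  assert (Hfst : forall w, In w (map fst W) -> exists p, In p W /\ w = fst p).
  { intros w Hw; apply in_map_iff in Hw as [p [<- Hp]]; eauto. }
  destruct (proj2 (proj2 (proj2 HU)) (map fst W) (fun w => e u (rep w))) as [z Hz].
  - intros w Hw; destruct (Hfst w Hw) as [p [Hp ->]]; rewrite (Hrep p Hp).
    destruct (Rle_lt_or_eq_dec _ _ (dist_ge0 He u (snd p))) as [|E]; [assumption|].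
    exfalso; apply Hpos; eauto.
  - intros w w' Hw Hw'.
    destruct (Hfst w Hw) as [p [Hp ->]]; destruct (Hfst w' Hw') as [q [Hq ->]].
    rewrite (Hrep p Hp), (Hrep q Hq), (HW p q Hp Hq).
    pose proof (dist_tri He (snd p) u (snd q)); pose proof (dist_tri He u (snd q) (snd p)).
    rewrite (dist_sym He (snd p) u) in *; rewrite (dist_sym He (snd q) (snd p)) in *; split; lra.
  - exists z; intros p Hp.
    rewrite (dist_sym Hd), <- (Hrep p Hp); apply Hz, in_map, Hp.
Qed.

Lemma extend_embedding {U : Type} {e : U -> U -> R} (He : is_metric e) {W : list (T * U)} (u : U) :
  dist_preserving d e W -> exists z, dist_preserving d e ((z, u) :: W).
Proof.
  intros HW; destruct (realize_point He u HW) as [z Hz].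
  exists z; apply (dist_preserving_cons Hd He HW Hz).
Qed.

Lemma extend_embedding_list {U : Type} {e : U -> U -> R} (He : is_metric e)
  {K : Type} (phi : K -> U) {W : list (T * U)} (ks : list K) :
  dist_preserving d e W ->
  exists M : list (K * T), map fst M = ks /\
    dist_preserving d e (map (fun p => (snd p, phi (fst p))) M ++ W).
Proof.
  intros HW; induction ks as [|k ks [M [HM HMW]]].
  - exists nil; split; [reflexivity | exact HW].
  - destruct (extend_embedding He (phi k) HMW) as [z Hz].
    exists ((k, z) :: M); split; [simpl; rewrite HM; reflexivity | exact Hz].
Qed.

(* Stated for every [L], so that a choice function [back_and_forth] can be read off. *)
Lemma back_and_forth_step (L : list (T * T)) (x : T) :
  exists L', dist_preserving d d L ->
    dist_preserving d d L' /\ incl L L' /\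
    (exists y, In (x, y) L') /\ (exists y, In (y, x) L').
Proof.
  destruct (classic (dist_preserving d d L)) as [HL|HL]; [|exists L; tauto].
  destruct (realize_point Hd x (dist_preserving_swap HL)) as [y Hy].
  assert (HL1 : dist_preserving d d ((x, y) :: L)).
  { apply (dist_preserving_cons Hd Hd HL); intros [a b] Hab; symmetry.
    apply (Hy (b, a)), in_map_iff; exists (a, b); auto. }
  destruct (extend_embedding Hd x HL1) as [z Hz].
  exists ((z, x) :: (x, y) :: L); intros _; split; [exact Hz|].
  split; [intros p Hp; simpl; auto|].
  split; [exists y | exists z]; simpl; auto.
Qed.

Section Completion.
Context (P : T -> T -> Prop)
  (P_dist : forall a b a' b', P a b -> P a' b' -> d a a' = d b b')
  (P_dense : forall x eps, 0 < eps -> exists a b, P a b /\ d a x < eps).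

(* [y] is where the isometry generated by [P] must send [x]. *)
Definition compatible (x y : T) : Prop := forall a b, P a b -> d x a = d y b.

Lemma compatible_dist {x y x' y'} : compatible x y -> compatible x' y' -> d x x' = d y y'.
Proof.
  intros Hxy Hxy'; apply eq_of_forall_close; intros eps He.
  destruct (P_dense x (eps / 4)) as [a [b [Pab Ha]]]; [lra|].
  destruct (P_dense x' (eps / 4)) as [a' [b' [Pab' Ha']]]; [lra|].
  pose proof (Hxy a b Pab); pose proof (Hxy' a' b' Pab'); pose proof (P_dist _ _ _ _ Pab Pab').
  pose proof (dist_tri4 Hd x a a' x'); pose proof (dist_tri4 Hd a x x' a').
  pose proof (dist_tri4 Hd y b b' y'); pose proof (dist_tri4 Hd b y y' b').
  rewrite (dist_sym Hd x a), (dist_sym Hd x' a'), (dist_sym Hd y b), (dist_sym Hd y' b') in *.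
  split; lra.
Qed.

Lemma compatible_exists x : exists y, compatible x y.
Proof.
  assert (Happrox : forall n, exists p : T * T, P (fst p) (snd p) /\ d (fst p) x < / INR (S n)).
  { intros n; destruct (P_dense x (/ INR (S n))) as [a [b Hab]].
    - apply Rinv_0_lt_compat, lt_0_INR; lia.
    - exists (a, b); exact Hab. }
  pose (ps n := proj1_sig (constructive_indefinite_description _ (Happrox n))).
  assert (Hps : forall n, P (fst (ps n)) (snd (ps n)) /\ d (fst (ps n)) x < / INR (S n))
    by (intros n; exact (proj2_sig (constructive_indefinite_description _ (Happrox n)))).
  destruct (proj1 (proj2 HU) (fun n => snd (ps n))) as [y Hy].
  - intros eps He; destruct (inv_succ_small (eps / 2)) as [N HN]; [lra|].
    exists N; intros m n Hm Hn.
    destruct (Hps m) as [Pm Dm]; destruct (Hps n) as [Pn Dn].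
    rewrite <- (P_dist _ _ _ _ Pm Pn); pose proof (HN m Hm); pose proof (HN n Hn).
    pose proof (dist_tri Hd (fst (ps m)) x (fst (ps n))).
    rewrite (dist_sym Hd x (fst (ps n))) in *; lra.
  - exists y; intros a b Pab; apply eq_of_forall_close; intros eps He.
    destruct (inv_succ_small (eps / 2)) as [N1 HN1]; [lra|].
    destruct (Hy (eps / 2)) as [N2 HN2]; [lra|].
    destruct (Hps (N1 + N2)%nat) as [Pn Dn].
    pose proof (HN1 (N1 + N2)%nat ltac:(lia)); pose proof (HN2 (N1 + N2)%nat ltac:(lia)).
    pose proof (P_dist _ _ _ _ Pn Pab).
    set (an := fst (ps (N1 + N2)%nat)) in *; set (bn := snd (ps (N1 + N2)%nat)) in *.
    pose proof (dist_tri Hd x an a); pose proof (dist_tri Hd an x a).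
    pose proof (dist_tri Hd y bn b); pose proof (dist_tri Hd bn y b).
    rewrite (dist_sym Hd x an), (dist_sym Hd y bn) in *; split; lra.
Qed.

End Completion.

Lemma isometry_of_dense_correspondence (P : T -> T -> Prop)
  (P_dist : forall a b a' b', P a b -> P a' b' -> d a a' = d b b')
  (P_dense_dom : forall x eps, 0 < eps -> exists a b, P a b /\ d a x < eps)
  (P_dense_rng : forall y eps, 0 < eps -> exists a b, P a b /\ d b y < eps) :
  exists f, isometry d f /\ forall a b, P a b -> f a = b.
Proof.
  pose (f x := epsilon (inhabits x) (compatible P x)).
  assert (Hf : forall x, compatible P x (f x))
    by (intros x; exact (epsilon_spec _ _ (compatible_exists P P_dist P_dense_dom x))).
  assert (Huniq : forall x y, compatible P x y -> f x = y).
  { intros x y Hxy; apply (dist_eq0 Hd).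
    rewrite <- (compatible_dist P P_dist P_dense_dom (Hf x) Hxy); apply (dist_xx Hd). }
  exists f; split; [split|].
  - intros y.
    assert (Pc_dist : forall b a b' a', P a b -> P a' b' -> d b b' = d a a')
      by (intros; symmetry; eauto).
    assert (Pc_dense : forall y eps, 0 < eps -> exists b a, P a b /\ d b y < eps)
      by (intros y' eps He; destruct (P_dense_rng y' eps He) as [a [b Hab]]; eauto).
    destruct (compatible_exists (fun b a => P a b) Pc_dist Pc_dense y) as [x Hx].
    exists x; apply Huniq; intros a b Pab; symmetry; exact (Hx b a Pab).
  - intros x y; symmetry; exact (compatible_dist P P_dist P_dense_dom (Hf x) (Hf y)).
  - intros a b Pab; apply Huniq; intros a' b' Pab'; exact (P_dist _ _ _ _ Pab Pab').
Qed.

Definition back_and_forth (L : list (T * T)) (x : T) : list (T * T) :=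
  proj1_sig (constructive_indefinite_description _ (back_and_forth_step L x)).

Lemma back_and_forthP L x : dist_preserving d d L ->
  dist_preserving d d (back_and_forth L x) /\ incl L (back_and_forth L x) /\
  (exists y, In (x, y) (back_and_forth L x)) /\ (exists y, In (y, x) (back_and_forth L x)).
Proof. exact (proj2_sig (constructive_indefinite_description _ (back_and_forth_step L x))). Qed.

Section BackAndForth.
Context (s : nat -> T) (s_dense : forall x eps, 0 < eps -> exists n, d (s n) x < eps)
  (L0 : list (T * T)) (HL0 : dist_preserving d d L0).

Fixpoint bf_chain (n : nat) : list (T * T) :=
  match n with
  | O => L0
  | S n => back_and_forth (bf_chain n) (s n)
  end.

Lemma bf_chain_dist_preserving n : dist_preserving d d (bf_chain n).
Proof. induction n as [|n IH]; [exact HL0 | exact (proj1 (back_and_forthP _ (s n) IH))]. Qed.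

Lemma bf_chain_incl {n m} : (n <= m)%nat -> incl (bf_chain n) (bf_chain m).
Proof.
  induction 1 as [|m _ IH]; [apply incl_refl|].
  apply (incl_tran IH), (back_and_forthP _ (s m) (bf_chain_dist_preserving m)).
Qed.

Definition in_bf_chain (a b : T) : Prop := exists n, In (a, b) (bf_chain n).

Lemma in_bf_chain_dist a b a' b' : in_bf_chain a b -> in_bf_chain a' b' -> d a a' = d b b'.
Proof.
  intros [n Hn] [m Hm].
  apply (bf_chain_dist_preserving (max n m) (a, b) (a', b'));
    [apply (bf_chain_incl (Nat.le_max_l n m)) | apply (bf_chain_incl (Nat.le_max_r n m))];
    assumption.
Qed.

Lemma in_bf_chain_dense_dom x eps : 0 < eps -> exists a b, in_bf_chain a b /\ d a x < eps.
Proof.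
  intros He; destruct (s_dense x eps He) as [n Hn].
  destruct (back_and_forthP _ (s n) (bf_chain_dist_preserving n)) as [_ [_ [[y Hy] _]]].
  exists (s n), y; split; [exists (S n); exact Hy | exact Hn].
Qed.

Lemma in_bf_chain_dense_rng y eps : 0 < eps -> exists a b, in_bf_chain a b /\ d b y < eps.
Proof.
  intros He; destruct (s_dense y eps He) as [n Hn].
  destruct (back_and_forthP _ (s n) (bf_chain_dist_preserving n)) as [_ [_ [_ [x Hx]]]].
  exists x, (s n); split; [exists (S n); exact Hx | exact Hn].
Qed.

End BackAndForth.

Lemma urysohn_homogeneous (L : list (T * T)) :
  dist_preserving d d L -> exists f, isometry d f /\ forall a b, In (a, b) L -> f a = b.
Proof.
  intros HL; destruct (proj1 (proj2 (proj2 HU))) as [s Hs].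
  destruct (isometry_of_dense_correspondence _ (in_bf_chain_dist s L HL)
              (in_bf_chain_dense_dom s Hs L HL) (in_bf_chain_dense_rng s Hs L HL)) as [f [Hf HfL]].
  exists f; split; [exact Hf|]; intros a b Hab; apply HfL; exists O; exact Hab.
Qed.

(* [b] realizes in [T] the point [(h a, delta)] of [T * R] with the l1 metric,
   in which [C] sits at height [0]. *)
Lemma exists_shifted_copy (h : T -> T) (Hh : forall x y, d (h x) (h y) = d x y)
  (delta : R) (Hdelta : 0 <= delta) (A C : list T) :
  exists M : list (T * T), map fst M = A /\ dist_preserving d d M /\
    forall a b y, In (a, b) M -> In y C -> d b y = d (h a) y + delta.
Proof.
  set (W0 := map (fun y => (y, (y, 0))) C).
  assert (HW0 : dist_preserving d (l1_dist d) W0).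
  { intros p q Hp Hq.
    apply in_map_iff in Hp as [y [<- _]]; apply in_map_iff in Hq as [y' [<- _]].
    unfold l1_dist; simpl; rewrite Rminus_diag, Rabs_R0; ring. }
  destruct (extend_embedding_list (l1_dist_metric Hd) (fun a => (h a, delta)) A HW0)
    as [M [HM HW]].
  assert (HinM : forall a b, In (a, b) M ->
            In (b, (h a, delta)) (map (fun p => (snd p, (h (fst p), delta))) M ++ W0)).
  { intros a b Hab; apply in_or_app; left; apply in_map_iff; exists (a, b); auto. }
  exists M; split; [exact HM | split].
  - intros [a b] [a' b'] Hab Hab'; simpl.
    pose proof (HW _ _ (HinM _ _ Hab) (HinM _ _ Hab')) as E; unfold l1_dist in E; simpl in E.
    rewrite Rminus_diag, Rabs_R0, Rplus_0_r, Hh in E; symmetry; exact E.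
  - intros a b y Hab Hy.
    assert (Hy0 : In (y, (y, 0)) (map (fun p => (snd p, (h (fst p), delta))) M ++ W0))
      by (apply in_or_app; right; apply (in_map (fun y => (y, (y, 0)))), Hy).
    pose proof (HW _ _ (HinM _ _ Hab) Hy0) as E; unfold l1_dist in E; simpl in E.
    rewrite Rminus_0_r, (Rabs_pos_eq _ Hdelta) in E; exact E.
Qed.

End Urysohn.

Theorem mainTheorem15 (T : Type) (d : T -> T -> R) (HU : is_urysohn d)
  (h : T -> T) (Hh : isometry d h) (delta : R) (Hdelta : 0 < delta)
  (A : list T) :
  exists f : T -> T, isometry d f /\
    (forall a, In a A -> d (f a) (h a) <= delta) /\
    (forall a b, In a A -> In b A -> delta <= d a (f b)).
Proof.
  pose proof (proj1 HU) as Hd.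
  destruct (exists_shifted_copy HU h (proj2 Hh) delta (Rlt_le _ _ Hdelta) A (A ++ map h A))
    as [M [HM [HMd Hshift]]].
  destruct (urysohn_homogeneous HU M HMd) as [f [Hf HfM]].
  assert (Hdom : forall a, In a A -> exists b, In (a, b) M).
  { rewrite <- HM; intros a Ha; apply in_map_iff in Ha as [[a' b] [<- Hab]]; eauto. }
  exists f; split; [exact Hf | split].
  - intros a Ha; destruct (Hdom a Ha) as [b Hab].
    rewrite (HfM _ _ Hab), (Hshift _ _ _ Hab), (dist_xx Hd); [lra|].
    apply in_or_app; right; apply in_map, Ha.
  - intros a b Ha Hb; destruct (Hdom b Hb) as [c Hbc].
    rewrite (HfM _ _ Hbc), (dist_sym Hd), (Hshift _ _ _ Hbc); [|apply in_or_app; left; exact Ha].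
    pose proof (dist_ge0 Hd (h b) a); lra.
Qed.
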